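(* Let $X$ be a non-empty set and let $R$ be a binary relation on $X$. The following are equivalent: (a) There exists a non-empty $w$-stable set of $(X,R)$. (b) There exists a compact topology $\tau$ on $X$ with respect to which $R$ is generalized upper tc-semicontinuous.
   Context: For a binary relation $R$ on $X$, write $xRy$ for $(x,y)\in R$. The transitive closure $\overline{R}$ of $R$ is defined by: $x\overline{R}y$ iff there exist $K\in\mathbb{N}$, $K\ge 1$, and $x_0,\dots,x_K\in X$ with $x_0=x$, $x_K=y$, and $x_{k-1}Rx_k$ for all $k\in\{1,\dots,K\}$. The asymmetric part of a relation $Q$ is $P(Q)$, defined by $xP(Q)y$ iff $xQy$ and not $yQx$. A set $F\subseteq X$ is a $w$-stable set of $(X,R)$ if (i) (internal stability) for all distinct $x,y\in F$, $(x,y)\notin\overline{R}$; and (ii) (external stability) for all $x\in F$ and $y\in X\setminus F$, if $y\overline{R}x$ then $x\overline{R}y$. The relation $R$ is generalized upper tc-semicontinuous with respect to a topology $\tau$ on $X$ if for every $x\in X$ the set $\{y\in X : xP(\overline{R})y\}$ is open in $\tau$. A topology is compact if every open cover of $X$ has a finite subcover. *)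

From Stdlib Require Import List Arith.

Definition tc {X : Type} (R : X -> X -> Prop) (x y : X) : Prop :=
  exists (K : nat) (s : nat -> X),
    1 <= K /\ s 0 = x /\ s K = y /\
    (forall k, 1 <= k -> k <= K -> R (s (k - 1)) (s k)).

Definition asym {X : Type} (Q : X -> X -> Prop) (x y : X) : Prop :=
  Q x y /\ ~ Q y x.

Definition w_stable {X : Type} (R : X -> X -> Prop) (F : X -> Prop) : Prop :=
  (forall x y, F x -> F y -> x <> y -> ~ tc R x y) /\
  (forall x y, F x -> ~ F y -> tc R y x -> tc R x y).

Definition is_topology {X : Type} (T : (X -> Prop) -> Prop) : Prop :=
  T (fun _ => True) /\
  T (fun _ => False) /\
  (forall U V, T U -> T V -> T (fun x => U x /\ V x)) /\
  (forall C : (X -> Prop) -> Prop, (forall U, C U -> T U) ->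
     T (fun x => exists U, C U /\ U x)).

Definition compact_top {X : Type} (T : (X -> Prop) -> Prop) : Prop :=
  forall C : (X -> Prop) -> Prop,
    (forall U, C U -> T U) ->
    (forall x, exists U, C U /\ U x) ->
    exists l : list (X -> Prop),
      (forall U, In U l -> C U) /\ (forall x, exists U, In U l /\ U x).

Definition gen_upper_tc_sc {X : Type} (R : X -> X -> Prop)
    (T : (X -> Prop) -> Prop) : Prop :=
  forall x, T (fun y => asym (tc R) x y).

(* Both conditions say that the strict part P of the transitive closure has a maximal
   element x0.  A member of a w-stable set is maximal: internal stability excludes
   dominators inside the set, external stability those outside.  Conversely [{x0}] is
   then w-stable, and the excluded point topology of x0 (a set containing x0 is open
   only if it is everything) is compact and makes every upper section of P open, since
   none of them contains x0.  If P has no maximal element, the open upper sections cover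
   X; a finite subcover is indexed by finitely many points, whose P-maximal one is
   covered by no section of the subcover. *)
From Stdlib Require Import List Arith Lia Classical.

Lemma tc_trans {X : Type} (R : X -> X -> Prop) x y z :
  tc R x y -> tc R y z -> tc R x z.
Proof.
  intros [K1 [s1 [HK1 [Hs1 [Hy Hstep1]]]]] [K2 [s2 [HK2 [Hs2 [Hz Hstep2]]]]].
  exists (K1 + K2), (fun k => if k <=? K1 then s1 k else s2 (k - K1)).
  split; [lia|]. split; [exact Hs1|]. split.
  { destruct (Nat.leb_spec (K1 + K2) K1); [lia|].
    replace (K1 + K2 - K1) with K2 by lia. exact Hz. }
  intros k Hk1 Hk2.
  destruct (Nat.leb_spec k K1); destruct (Nat.leb_spec (k - 1) K1); try lia.
  - apply Hstep1; lia.
  - replace (k - 1) with K1 by lia. rewrite Hy, <- Hs2.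
    replace (k - K1) with 1 by lia. apply (Hstep2 1); lia.
  - replace (k - 1 - K1) with (k - K1 - 1) by lia. apply Hstep2; lia.
Qed.

Lemma asym_irrefl {X : Type} (Q : X -> X -> Prop) x : ~ asym Q x x.
Proof. intros [Hxx Hnxx]. exact (Hnxx Hxx). Qed.

Lemma asym_trans {X : Type} (Q : X -> X -> Prop) :
  (forall x y z, Q x y -> Q y z -> Q x z) ->
  forall x y z, asym Q x y -> asym Q y z -> asym Q x z.
Proof.
  intros Qtrans x y z [Hxy Hnyx] [Hyz Hnzy]. split.
  - exact (Qtrans x y z Hxy Hyz).
  - intro Hzx. exact (Hnzy (Qtrans z x y Hzx Hxy)).
Qed.

Lemma list_has_maximal {X : Type} (P : X -> X -> Prop) :
  (forall x y z, P x y -> P y z -> P x z) -> (forall x, ~ P x x) ->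
  forall xs : list X, xs <> nil ->
  exists x, In x xs /\ forall y, In y xs -> ~ P y x.
Proof.
  intros Ptrans Pirr xs. induction xs as [|a xs IH]; intros Hne; [congruence|].
  destruct xs as [|b xs].
  - exists a. split; [left; reflexivity|].
    intros y [<-|[]]. exact (Pirr a).
  - destruct IH as [x [Hx Hmax]]; [discriminate|].
    destruct (classic (P a x)) as [Hax|Hnax].
    + exists a. split; [left; reflexivity|].
      intros y [<-|Hy] Hya; [exact (Pirr a Hya)|].
      exact (Hmax y Hy (Ptrans y a x Hya Hax)).
    + exists x. split; [right; exact Hx|].
      intros y [<-|Hy]; [exact Hnax|exact (Hmax y Hy)].
Qed.

Lemma In_map_surj {A B : Type} (f : A -> B) (l : list B) :
  (forall b, In b l -> exists a, f a = b) -> exists xs, map f xs = l.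
Proof.
  induction l as [|b l IH]; intros Hl.
  - exists nil. reflexivity.
  - destruct (Hl b (or_introl eq_refl)) as [a Ha].
    destruct IH as [xs Hxs]; [intros c Hc; exact (Hl c (or_intror Hc))|].
    exists (a :: xs). simpl. congruence.
Qed.

Definition tc_maximal {X : Type} (R : X -> X -> Prop) (x0 : X) : Prop :=
  forall x, ~ asym (tc R) x x0.

Section StableSets.
Context {X : Type} (R : X -> X -> Prop).

Lemma w_stable_tc_maximal (F : X -> Prop) x0 :
  w_stable R F -> F x0 -> tc_maximal R x0.
Proof.
  intros [Hint Hext] Fx0 x [Hxx0 Hnx0x].
  destruct (classic (F x)) as [Fx|nFx].
  - destruct (classic (x = x0)) as [->|Hne].
    + exact (Hnx0x Hxx0).
    + exact (Hint x x0 Fx Fx0 Hne Hxx0).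
  - exact (Hnx0x (Hext x0 x Fx0 nFx Hxx0)).
Qed.

Lemma tc_maximal_w_stable x0 :
  tc_maximal R x0 -> w_stable R (fun y => y = x0).
Proof.
  intros Hmax. split.
  - intros x y -> -> Hne. congruence.
  - intros x y -> Hy Hyx.
    destruct (classic (tc R x0 y)) as [Hx0y|Hnx0y]; [exact Hx0y|].
    destruct (Hmax y). split; assumption.
Qed.

End StableSets.

Definition excluded_point_topology {X : Type} (x0 : X) (U : X -> Prop) : Prop :=
  U x0 -> forall y, U y.

Section ExcludedPoint.
Context {X : Type} (x0 : X).

Lemma excluded_point_is_topology : is_topology (excluded_point_topology x0).
Proof.
  split; [intros _ y; exact I|]. split; [intros []|]. split.
  - intros U V HU HV [Ux0 Vx0] y. exact (conj (HU Ux0 y) (HV Vx0 y)).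
  - intros C HC [U [CU Ux0]] y. exists U. exact (conj CU (HC U CU Ux0 y)).
Qed.

Lemma excluded_point_compact : compact_top (excluded_point_topology x0).
Proof.
  intros C HC Hcov. destruct (Hcov x0) as [U [CU Ux0]].
  exists (U :: nil). split.
  - intros V [<-|[]]. exact CU.
  - intros y. exists U. exact (conj (or_introl eq_refl) (HC U CU Ux0 y)).
Qed.

Lemma excluded_point_gen_upper_tc_sc (R : X -> X -> Prop) :
  tc_maximal R x0 -> gen_upper_tc_sc R (excluded_point_topology x0).
Proof. intros Hmax x Hx0. destruct (Hmax x Hx0). Qed.

End ExcludedPoint.

Lemma compact_gen_upper_tc_sc_tc_maximal {X : Type} (R : X -> X -> Prop)
    (T : (X -> Prop) -> Prop) :
  inhabited X -> compact_top T -> gen_upper_tc_sc R T ->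
  exists x0, tc_maximal R x0.
Proof.
  intros [a] Hcomp Hsc.
  apply NNPP. intros Hnomax.
  set (section x := fun y => asym (tc R) x y).
  assert (Hdominated : forall y, exists x, section x y).
  { intros y. apply NNPP. intros Hny.
    apply Hnomax. exists y. intros x Hxy. exact (Hny (ex_intro _ x Hxy)). }
  destruct (Hcomp (fun U => exists x, section x = U)) as [l [Hl Hcov]].
  - intros U [x <-]. apply Hsc.
  - intros y. destruct (Hdominated y) as [x Hxy].
    exists (section x). exact (conj (ex_intro _ x eq_refl) Hxy).
  - destruct (In_map_surj section l Hl) as [xs <-].
    assert (Hxs : xs <> nil).
    { intros ->. destruct (Hcov a) as [U [[] _]]. }
    destruct (list_has_maximal (asym (tc R)) (asym_trans (tc R) (tc_trans R))
                (asym_irrefl (tc R)) xs Hxs) as [x [_ Hmax]].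
    destruct (Hcov x) as [U [HU Ux]].
    apply in_map_iff in HU. destruct HU as [y [<- Hy]].
    exact (Hmax y Hy Ux).
Qed.

Theorem theorem1 (X : Type) (R : X -> X -> Prop) (hX : inhabited X) :
  (exists F : X -> Prop, (exists x, F x) /\ w_stable R F) <->
  (exists T : (X -> Prop) -> Prop,
     is_topology T /\ compact_top T /\ gen_upper_tc_sc R T).
Proof.
  split.
  - intros [F [[x0 Fx0] Hstable]].
    exists (excluded_point_topology x0).
    split; [apply excluded_point_is_topology|].
    split; [apply excluded_point_compact|].
    exact (excluded_point_gen_upper_tc_sc x0 R (w_stable_tc_maximal R F x0 Hstable Fx0)).
  - intros [T [_ [Hcomp Hsc]]].
    destruct (compact_gen_upper_tc_sc_tc_maximal R T hX Hcomp Hsc) as [x0 Hmax].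
    exists (fun y => y = x0). split; [exists x0; reflexivity|].
    exact (tc_maximal_w_stable R x0 Hmax).
Qed.
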